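(* Let $(\mathbf{x},y)\in\mathcal{X}\times\{1,\dots,c\}$, let $\mathbb{F}_s:\mathcal{X}\to\{1,\dots,c\}$ be a single-label classifier, let $\mathcal{R}$ be a set of patch regions and let $\mathcal{M}$ be an $\mathcal{R}$-covering mask set. Let $\boldsymbol{\lambda}\in\{0,1\}^{\mathcal{M}}$ be the array returned by DoubleMaskingCert$(\mathbf{x},y,\mathbb{F}_s,\mathcal{R},\mathcal{M})$. If $\mathbf{m}^*\in\mathcal{M}$ satisfies $\boldsymbol{\lambda}[\mathbf{m}^*]=1$, then for every patch region $\mathbf{r}\in\mathcal{R}$ that is covered by $\mathbf{m}^*$ (i.e. $\mathbf{m}^*[i,j]\le\mathbf{r}[i,j]$ for all $(i,j)$) and every $\mathbf{x}''\in\mathcal{X}$, $$\mathrm{DoubleMaskingInfer}(\mathbf{r}\circ\mathbf{x}+(\mathbf{1}-\mathbf{r})\circ\mathbf{x}'',\ \mathbb{F}_s,\ \mathcal{M})=y,$$ regardless of how ties in the majority vote and the iteration order over disagreers are resolved.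
   Context: Images lie in $\mathcal{X}\subseteq\mathbb{R}^{w\times h\times\gamma}$; patch regions and masks are binary matrices in $\{0,1\}^{w\times h}$ with entries $0$ inside the region/mask and $1$ outside; $\circ$ is entrywise product (broadcast over channels). A mask set $\mathcal{M}$ is $\mathcal{R}$-covering if for every $\mathbf{r}\in\mathcal{R}$ there is $\mathbf{m}\in\mathcal{M}$ with $\mathbf{m}[i,j]\le\mathbf{r}[i,j]$ for all $(i,j)$. MaskPred$(\mathbf{z},\mathbb{F}_s,\mathcal{M})$: form $\mathcal{P}=\{(\mathbf{m},\mathbb{F}_s(\mathbf{z}\circ\mathbf{m})):\mathbf{m}\in\mathcal{M}\}$; let $\hat{y}_{maj}$ be a label attaining the maximum of $|\{(\mathbf{m},\hat y)\in\mathcal{P}:\hat y=y^*\}|$ over $y^*$ (ties broken arbitrarily); let $\mathcal{P}_{dis}=\{(\mathbf{m},\hat y)\in\mathcal{P}:\hat y\ne\hat y_{maj}\}$; return $(\hat y_{maj},\mathcal{P}_{dis})$. DoubleMaskingInfer$(\mathbf{z},\mathbb{F}_s,\mathcal{M})$: compute $(\hat y_{maj},\mathcal{P}_{dis})=$MaskPred$(\mathbf{z},\mathbb{F}_s,\mathcal{M})$. If $\mathcal{P}_{dis}=\emptyset$, return $\hat y_{maj}$. Otherwise, iterate over $(\mathbf{m}_{dis},\hat y_{dis})\in\mathcal{P}_{dis}$ in some order; for each compute $(\hat y',\mathcal{P}')=$MaskPred$(\mathbf{z}\circ\mathbf{m}_{dis},\mathbb{F}_s,\mathcal{M})$ and if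 $\mathcal{P}'=\emptyset$ return $\hat y_{dis}$. If no disagreer returned, return $\hat y_{maj}$. DoubleMaskingCert$(\mathbf{x},y,\mathbb{F}_s,\mathcal{R},\mathcal{M})$: if $\mathcal{M}$ is not $\mathcal{R}$-covering, return $(0,\mathbf{0})$. Otherwise initialize $\boldsymbol{\lambda}[\mathbf{m}]=1$ for all $\mathbf{m}\in\mathcal{M}$ and $certVal=1$; for every ordered pair $(\mathbf{m}_0,\mathbf{m}_1)\in\mathcal{M}\times\mathcal{M}$, if $\mathbb{F}_s(\mathbf{x}\circ\mathbf{m}_0\circ\mathbf{m}_1)\ne y$ then set $certVal=0$, $\boldsymbol{\lambda}[\mathbf{m}_0]=0$, $\boldsymbol{\lambda}[\mathbf{m}_1]=0$. Return $(certVal,\boldsymbol{\lambda})$. (Thus $\boldsymbol{\lambda}[\mathbf{m}^*]=1$ iff $\mathbb{F}_s(\mathbf{x}\circ\mathbf{m}^*\circ\mathbf{m})=y$ and $\mathbb{F}_s(\mathbf{x}\circ\mathbf{m}\circ\mathbf{m}^* )=y$ for all $\mathbf{m}\in\mathcal{M}$, given $\mathcal{M}$ is $\mathcal{R}$-covering.) *)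

From HB Require Import structures.
From mathcomp Require Import all_boot all_order all_algebra.
From mathcomp Require Import reals.
Set Implicit Arguments. Unset Strict Implicit. Unset Printing Implicit Defensive.
Import Order.TTheory GRing.Theory Num.Theory.
Local Open Scope ring_scope.

Definition pimage (R : realType) (w h g : nat) := 'I_w -> 'I_h -> 'I_g -> R.

(* Binary w x h matrices (patch regions and masks):
   false = 0 (inside the region/pmask), true = 1 (outside). *)
Definition pmask (w h : nat) := 'M[bool]_(w, h).
Arguments pimage : clear implicits.
Arguments pmask : clear implicits.

Definition mask_img (R : realType) w h g (z : pimage R w h g) (m : pmask w h)
  : pimage R w h g :=
  fun i j k => (m i j : nat)%:R * z i j k.

Definition patch_img (R : realType) w h g (r : pmask w h) (x x'' : pimage R w h g)
  : pimage R w h g :=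
  fun i j k => (r i j : nat)%:R * x i j k + (1 - (r i j : nat)%:R) * x'' i j k.

Definition mask_le w h (m r : pmask w h) : bool :=
  [forall i, forall j, (m i j : nat) <= (r i j : nat)]%N.

Definition covering w h (Rg M : {set pmask w h}) : bool :=
  [forall r in Rg, exists m in M, mask_le m r].

Section MaskPred.
Variables (R : realType) (w h g c : nat).
Variable F : pimage R w h g -> 'I_c.
Variable M : {set pmask w h}.

Definition pred_count (z : pimage R w h g) (ys : 'I_c) : nat :=
  #|[set m in M | F (mask_img z m) == ys]|.

(* yhat attains the maximum of the vote count (any tie-breaking is allowed). *)
Definition is_majority (z : pimage R w h g) (yh : 'I_c) : Prop :=
  forall ys, (pred_count z ys <= pred_count z yh)%N.

(* P_dis (identified with its set of masks; the label of a pair (m, _)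
   is F (z o m)). *)
Definition disagreers (z : pimage R w h g) (yh : 'I_c) : {set pmask w h} :=
  [set m in M | F (mask_img z m) != yh].

(* Iteration over the disagreers in the order s; for each m_dis the inner
   MaskPred uses the majority label ch m_dis (tie-breaking choice). *)
Fixpoint dm_run (z : pimage R w h g) (ch : pmask w h -> 'I_c) (yh : 'I_c)
    (s : seq (pmask w h)) : 'I_c :=
  match s with
  | [::] => yh
  | m :: s' =>
      if disagreers (mask_img z m) (ch m) == set0 then F (mask_img z m)
      else dm_run z ch yh s'
  end.

(* o is a possible output of DoubleMaskingInfer(z, F, M) for SOME resolution
   of majority ties (outer and inner) and SOME iteration order over P_dis. *)
Definition dm_infer_out (z : pimage R w h g) (o : 'I_c) : Prop :=
  exists yh, is_majority z yh /\
  exists s : seq (pmask w h), perm_eq s (enum (disagreers z yh)) /\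
  exists ch : pmask w h -> 'I_c,
    (forall m, is_majority (mask_img z m) (ch m)) /\
    o = dm_run z ch yh s.

End MaskPred.

Definition dm_cert (R : realType) w h g c (x : pimage R w h g) (y : 'I_c)
    (F : pimage R w h g -> 'I_c) (Rg M : {set pmask w h})
  : bool * (pmask w h -> bool) :=
  if ~~ covering Rg M then (false, fun _ => false) else
  foldl (fun (st : bool * (pmask w h -> bool)) (p : pmask w h * pmask w h) =>
           let: (cv, lam) := st in
           let: (m0, m1) := p in
           if F (mask_img (mask_img x m0) m1) != y then
             (false, fun m => if (m == m0) || (m == m1) then false else lam m)
           else (cv, lam))
        (true, fun _ => true)
        [seq (m0, m1) | m0 <- enum M, m1 <- enum M].

From HB Require Import structures.
From mathcomp Require Import all_boot all_order all_algebra.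
From mathcomp Require Import reals.
From mathcomp Require Import boolp.
Set Implicit Arguments. Unset Strict Implicit. Unset Printing Implicit Defensive.
Import Order.TTheory GRing.Theory Num.Theory.

(* Masking is idempotent and commutative, and a mask m* covering the patch
   erases it: the patched image z satisfies z.m* = x.m*.  The certificate
   makes every double masking x.m*.m and x.m.m* predict y.  Hence a
   disagreer m whose second-round votes are unanimous votes for
   F z.m.m* = F x.m.m* = y, and its own label F z.m = F z.m.m agrees with
   that vote.  If instead the algorithm falls back to the first-round label
   yh, then yh = y: otherwise m* is a disagreer (since F z.m* = y) whose
   second round is unanimous, so the loop would have returned earlier. *)

Section Masking.
Variables (R : realType) (w h g : nat).
Implicit Types (u x : pimage R w h g) (m r : pmask w h).

Lemma mask_imgK u m : mask_img (mask_img u m) m = mask_img u m.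
Proof.
do 3![apply: funext => ?]; rewrite /mask_img.
by case: (m _ _); rewrite ?mul0r ?mul1r.
Qed.

Lemma mask_imgC u m m' :
  mask_img (mask_img u m) m' = mask_img (mask_img u m') m.
Proof.
by do 3![apply: funext => ?]; rewrite /mask_img mulrCA.
Qed.

Lemma mask_patch_img r m x (x'' : pimage R w h g) :
  mask_le m r -> mask_img (patch_img r x x'') m = mask_img x m.
Proof.
move=> /forallP mr.
apply: funext => i; apply: funext => j.
apply: funext => k; rewrite /mask_img /patch_img.
move/forallP/(_ j): (mr i); case: (m i j) => //; case: (r i j) => //= _;
  by rewrite ?mul0r // !mul1r subrr mul0r addr0.
Qed.

End Masking.

Section Voting.
Variables (R : realType) (w h g c : nat).
Variable F : pimage R w h g -> 'I_c.
Variable M : {set pmask w h}.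
Implicit Types (z u : pimage R w h g) (m : pmask w h) (l : 'I_c).

Definition unanimous z (ch : pmask w h -> 'I_c) m :=
  disagreers F M (mask_img z m) (ch m) == set0.

Lemma disagreers_eq0P u l :
  reflect (forall m, m \in M -> F (mask_img u m) = l)
          (disagreers F M u l == set0).
Proof.
apply: (iffP eqP) => [/setP D m mM | agree].
  by have := D m; rewrite !inE mM /= => /negbFE/eqP.
by apply/setP => m; rewrite !inE; case mM: (m \in M); rewrite //= agree ?eqxx.
Qed.

Lemma majority_unanimous u l y m0 :
  m0 \in M -> (forall m, m \in M -> F (mask_img u m) = y) ->
  is_majority F M u l -> l = y.
Proof.
move=> m0M agree /(_ y) le.
have /card_gt0P [m] : (0 < pred_count F M u l)%N.
  by apply: leq_trans le; apply/card_gt0P; exists m0; rewrite inE m0M agree ?eqxx.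
by rewrite inE => /andP [mM /eqP <-]; apply: agree.
Qed.

Lemma dm_run_cases z ch yh s :
  (dm_run F M z ch yh s = yh /\ forall m, m \in s -> ~~ unanimous z ch m) \/
  exists2 m, m \in s & unanimous z ch m /\ dm_run F M z ch yh s = F (mask_img z m).
Proof.
elim: s => [|m s IH] /=; first by left.
case: ifP => [um | num]; first by right; exists m; rewrite ?mem_head.
case: IH => [[-> nu] | [m' m's um']]; last by right; exists m'; rewrite ?inE ?m's ?orbT.
left; split => // m'; rewrite inE => /orP [/eqP -> | /nu //].
by rewrite /unanimous num.
Qed.

Lemma unanimous_label z ch m m' : unanimous z ch m -> m \in M -> m' \in M ->
  F (mask_img z m) = F (mask_img (mask_img z m) m').
Proof.
by move=> /disagreers_eq0P agree mM m'M; rewrite -{1}mask_imgK !agree.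
Qed.

End Voting.

Section Certificate.
Variables (R : realType) (w h g c : nat).
Variables (x : pimage R w h g) (y : 'I_c) (F : pimage R w h g -> 'I_c).

Definition cert_step (st : bool * (pmask w h -> bool)) (p : pmask w h * pmask w h) :=
  let: (cv, lam) := st in
  let: (m0, m1) := p in
  if F (mask_img (mask_img x m0) m1) != y then
    (false, fun m => if (m == m0) || (m == m1) then false else lam m)
  else (cv, lam).

Lemma foldl_cert_step l st m :
  (foldl cert_step st l).2 m ->
  st.2 m /\ forall p, p \in l -> F (mask_img (mask_img x p.1) p.2) != y ->
    (m != p.1) && (m != p.2).
Proof.
elim: l st => [|[m0 m1] l IH] [cv lam] //= /IH [+ later]; rewrite /cert_step.
case: ifP => [bad | good] /=; last first.
  move=> lam_m; split=> // p.
  by rewrite inE => /orP [/eqP -> /= | /later //]; rewrite good.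
case: ifP => // /norP [ne0 ne1] lam_m; split=> // p.
by rewrite inE => /orP [/eqP -> /= | /later //]; rewrite ne0 ne1.
Qed.

Lemma dm_cert_robust Rg M mstar :
  covering Rg M -> mstar \in M -> (dm_cert x y F Rg M).2 mstar ->
  forall m, m \in M -> F (mask_img (mask_img x mstar) m) = y.
Proof.
rewrite /dm_cert => -> mstarM /= /foldl_cert_step [_ cert] m mM.
apply/eqP; apply: contraT => /(cert (mstar, m)).
by rewrite allpairs_f ?mem_enum // eqxx => /(_ isT).
Qed.

End Certificate.

Theorem mainTheorem3 (R : realType) (w h g c : nat)
    (x : pimage R w h g) (y : 'I_c) (F : pimage R w h g -> 'I_c)
    (Rg M : {set pmask w h}) (mstar : pmask w h) :
  covering Rg M ->
  mstar \in M ->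
  (dm_cert x y F Rg M).2 mstar = true ->
  forall r : pmask w h, r \in Rg -> mask_le mstar r ->
  forall (x'' : pimage R w h g) (o : 'I_c),
    dm_infer_out F M (patch_img r x x'') o -> o = y.
Proof.
move=> covM mstarM /(dm_cert_robust covM mstarM) cert r _ mstar_r x'' o.
set z := patch_img r x x''.
have z_mstar m : m \in M -> F (mask_img (mask_img z mstar) m) = y.
  by rewrite mask_patch_img //; apply: cert.
case=> yh [_ [s [sperm [ch [chmaj ->]]]]].
have [[-> not_unan] | [m ms [unan_m ->]]] := dm_run_cases F M z ch yh s.
  apply/eqP; apply: contraT => yh_y.
  have ch_mstar : ch mstar = y := majority_unanimous mstarM z_mstar (chmaj mstar).
  have mstar_s : mstar \in s.
    by rewrite (perm_mem sperm) mem_enum inE mstarM -mask_imgK z_mstar // eq_sym.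
  have /negP[] := not_unan _ mstar_s.
  by apply/disagreers_eq0P; rewrite ch_mstar.
have mM : m \in M by move: ms; rewrite (perm_mem sperm) mem_enum inE => /andP[].
by rewrite (unanimous_label unan_m mM mstarM) mask_imgC z_mstar.
Qed.
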